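(* Let $(\Omega,\mathcal{F},\mathbb{P})$ be a nonatomic probability space, let $\gamma>0$, let $u(x)=1-e^{-\gamma x}$ for $x\in\mathbb{R}$, let $\alpha<1$, and set $\mathcal{A}_u^\infty=\{X\in L^\infty:\mathbb{E}[u(X)]\ge\alpha\}$. Let $S=(S_0,S_T)$ be a traded asset with $S_T\in L^\infty$ and assume $\rho_{\mathcal{A}_u^\infty,S}$ is finite-valued on $L^\infty$. Then $\mathrm{Index}_{\mathrm{fin}}(\rho_{\mathcal{A}_u^\infty,S})=\infty$.
   Context: A traded asset is $S=(S_0,S_T)$ with $S_0>0$, $S_T\ge0$ a.s., $S_T\ne0$. For $\mathcal{B}\subset L^\infty$, $\rho_{\mathcal{B},S}(X)=\inf\{m\in\mathbb{R}:X+\frac{m}{S_0}S_T\in\mathcal{B}\}$. For a convex, law-invariant acceptance set $\mathcal{A}\subset L^\infty$ with $\rho_{\mathcal{A},S}$ finite-valued on $L^\infty$, $\mathrm{Index}_{\mathrm{fin}}(\rho_{\mathcal{A},S})=\inf\{p\in[1,\infty):\text{the closure of }\mathcal{A}\text{ in }L^p\text{ has nonempty interior in }L^p\}$, with $\inf\emptyset=\infty$. *)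

From HB Require Import structures.
From mathcomp Require Import all_boot all_order all_algebra.
From mathcomp Require Import all_classical all_reals all_analysis.
Set Implicit Arguments. Unset Strict Implicit. Unset Printing Implicit Defensive.
Import Order.TTheory GRing.Theory Num.Theory.
Local Open Scope classical_set_scope.
Local Open Scope ring_scope.

Section Defs.
Context d (T : measurableType d) (R : realType) (P : probability T R).

Definition nonatomic : Prop :=
  forall A : set T, measurable A -> (0 < P A)%E ->
    exists B : set T, [/\ measurable B, B `<=` A, (0 < P B)%E & (P B < P A)%E].

Definition Linf : set (T -> R) := [set X | X \in Lfun P +oo%E].
Definition Lp (p : R) : set (T -> R) := [set X | X \in Lfun P p%:E].

Definition Lp_dist (p : R) (X Y : T -> R) : \bar R :=
  Lnorm P p%:E (EFin \o (X \- Y)).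

Definition rho (B : set (T -> R)) (S0 : R) (ST : T -> R) (X : T -> R) : \bar R :=
  ereal_inf (EFin @` [set m : R | B (fun w => X w + m / S0 * ST w)]).

Definition finite_valued_on_Linf (B : set (T -> R)) (S0 : R) (ST : T -> R) :=
  forall X, Linf X -> rho B S0 ST X \is a fin_num.

Definition Lp_closure (p : R) (A : set (T -> R)) : set (T -> R) :=
  [set Y | Lp p Y /\ forall e : R, 0 < e ->
     exists X, [/\ A X, Lp p X & (Lp_dist p X Y < e%:E)%E]].

Definition Lp_interior_nonempty (p : R) (C : set (T -> R)) : Prop :=
  exists Y, Lp p Y /\ C Y /\ exists e : R, 0 < e /\
    forall Z, Lp p Z -> (Lp_dist p Z Y < e%:E)%E -> C Z.

(* Index_fin: inf { p in [1,oo) : cl_{L^p}(A) has nonempty L^p-interior },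
   with inf of the empty set = +oo *)
Definition IndexFin (A : set (T -> R)) : \bar R :=
  ereal_inf (EFin @` [set p : R | 1 <= p /\ Lp_interior_nonempty p (Lp_closure p A)]).

Definition u_exp (gamma : R) (x : R) : R := 1 - expR (- (gamma * x)).

Definition A_u (gamma alpha : R) : set (T -> R) :=
  [set X | Linf X /\ (alpha%:E <= \int[P]_w (u_exp gamma (X w))%:E)%E].

End Defs.

(** For every p >= 1 the L^p-closure of the acceptance set has empty
   interior. Let Y lie in it together with a ball of radius e. On a set B of
   small probability δ (nonatomicity) on which Y <= K, push Y down by
   c = e / (2 δ^(1/p)): Z = Y - c 1_B is at L^p-distance e/2 from Y, so some
   acceptable X is L^p-close to Z. Then X <= K - c + 1 on more than half of
   B, so u(X) <= 1 - exp(gamma (c - K - 1)) there, and E[u(X)] >= alpha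
   forces exp(gamma (c - K - 1)) δ < 2 (1 - alpha). This fails for small δ,
   since exp(1/q) beats every power of q as q -> 0. *)
From HB Require Import structures.
From mathcomp Require Import all_boot all_order all_algebra.
From mathcomp Require Import all_classical all_reals all_analysis.
From mathcomp Require Import lra ring measurable_realfun.
Import Order.TTheory GRing.Theory Num.Theory.
Local Open Scope classical_set_scope.
Local Open Scope ring_scope.

Lemma expR_div_mul_powR_ge_near0 {R : realType} (a b C p : R) : 0 < a -> 1 <= p ->
  exists2 q0 : R, 0 < q0 &
    forall q, 0 < q -> q <= q0 -> C <= expR (a / q - b) * q `^ p.
Proof.
move=> a0 p1; set N := Num.Def.archi_bound p.
have pN : p <= N%:R by apply/ltW/archi_boundP; lra.
set M := expR (- b) * a ^+ N.+1 / (N.+1)`!%:R.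
have M0 : 0 < M by rewrite /M divr_gt0 ?ltr0n ?fact_gt0// mulr_gt0 ?expR_gt0 ?exprn_gt0.
have C1 : 0 < `|C| + 1 by rewrite ltr_wpDl.
exists (Num.min 1 (M / (`|C| + 1))); first by rewrite lt_min ltr01 divr_gt0.
move=> q q0; rewrite le_min => /andP[q1 qM].
have qN_le : q ^+ N <= q `^ p.
  by rewrite -powR_mulrn ?(ltW q0)//; apply: ger_powR; rewrite ?q0.
have taylor : (a / q) ^+ N.+1 / (N.+1)`!%:R <= expR (a / q).
  by apply: le_trans (expR_ge1Dxn N _); rewrite ?lerDr// divr_ge0 ?ltW.
have Mq : M / q <= expR (a / q - b) * q `^ p.
  have -> : expR (a / q - b) * q `^ p = expR (- b) * (expR (a / q) * q `^ p).
    by rewrite expRD; ring.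
  have -> : M / q = expR (- b) * ((a / q) ^+ N.+1 / (N.+1)`!%:R * q ^+ N).
    rewrite /M expr_div_n [q ^+ N.+1]exprSr; field.
    by rewrite expf_neq0 ?gt_eqF ?ltr0n ?fact_gt0.
  rewrite ler_wpM2l ?expR_ge0// ler_pM// ?exprn_ge0 ?ltW//.
  by rewrite divr_gt0 ?ltr0n ?fact_gt0// exprn_gt0// divr_gt0.
have CMq : `|C| + 1 <= M / q by rewrite ler_pdivlMr// mulrC -ler_pdivlMr.
by apply: le_trans Mq; have := ler_norm C; lra.
Qed.

Lemma measurable_sublevel {d} {T : measurableType d} {R : realType} {Y : T -> R} (K : R) :
  measurable_fun setT Y -> measurable [set w | Y w <= K].
Proof.
by move=> mY; rewrite -preimage_itvNyc -[_ @^-1` _]setTI; exact: mY.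
Qed.

Lemma le_integral_integrable {d} {T : measurableType d} {R : realType}
    {mu : measure T R} {f g : T -> \bar R} :
  measurable_fun setT f -> mu.-integrable setT g -> (forall w, (f w <= g w)%E) ->
  (\int[mu]_w f w <= \int[mu]_w g w)%E.
Proof.
move=> mf /integrableP[mg _] fg; rewrite integralE [leRHS]integralE.
apply: leeB; apply: ge0_le_integral => //.
- exact: measurable_funepos.
- exact: measurable_funepos.
- by move=> x _; apply: (@funepos_le _ _ setT); rewrite ?in_setT// => y _; exact: fg.
- exact: measurable_funeneg.
- exact: measurable_funeneg.
- by move=> x _; apply: (@funeneg_le _ _ setT); rewrite ?in_setT// => y _; exact: fg.
Qed.

Section probability.
Context d (T : measurableType d) (R : realType) (P : probability T R).
Local Open Scope ereal_scope.

Lemma nonatomic_subset_le_expn {A : set T} : nonatomic P ->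
  measurable A -> 0 < P A -> forall n : nat,
  exists B, [/\ measurable B, B `<=` A, 0 < P B & P B <= ((2:R)^-1 ^+ n)%:E].
Proof.
move=> nP mA PA0; elim=> [|n [B [mB BA PB0 PBn]]].
  by exists A; split; rewrite // expr0 probability_le1.
have [C [mC CB PC0 PCB]] := nP B mB PB0.
have [Csmall|Cbig] := leP (P C) ((2:R)^-1 ^+ n.+1)%:E.
  by exists C; split => //; exact: subset_trans BA.
exists (B `\` C); split => //.
- exact: measurableD.
- by move=> x [/BA].
- rewrite measureD ?(setIidr CB) ?(le_lt_trans (probability_le1 P mB) (ltry _))//.
  have fC := fin_num_measure P _ mC.
  by rewrite -(subee fC) lte_leB.
- rewrite measureD ?(setIidr CB) ?(le_lt_trans (probability_le1 P mB) (ltry _))//.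
  apply: le_trans (leeB PBn (ltW Cbig)) _.
  by rewrite -EFinB lee_fin exprS; lra.
Qed.

Lemma nonatomic_subset_small {A : set T} {eps : R} : nonatomic P ->
  measurable A -> 0 < P A -> (0 < eps)%R ->
  exists B, [/\ measurable B, B `<=` A, 0 < P B & P B <= eps%:E].
Proof.
move=> nP mA PA0 eps0; set N := Num.Def.archi_bound eps^-1.
have epsN : (eps^-1 < N%:R)%R by apply: archi_boundP; rewrite invr_ge0 ltW.
have [B [mB BA PB0 PBN]] := nonatomic_subset_le_expn nP mA PA0 N.
exists B; split => //; apply: le_trans PBN _; rewrite lee_fin exprVn.
rewrite -[leRHS]invrK lef_pV2 ?posrE ?invr_gt0 ?exprn_gt0//.
by apply/ltW/(lt_trans epsN); rewrite -natrX ltr_nat ltn_expl.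
Qed.

Lemma exists_sublevel_gt0 {Y : T -> R} : measurable_fun setT Y ->
  exists K : R, 0 < P [set w | (Y w <= K)%R].
Proof.
move=> mY; apply/not_existsP => PK0.
have PK : forall n : nat, P [set w | (Y w <= n%:R)%R] = 0.
  by move=> n; apply/eqP; rewrite eq_le measure_ge0 andbT leNgt; apply/negP/PK0.
have cover : [set: T] `<=` \bigcup_n [set w | (Y w <= n%:R)%R].
  move=> w _; exists (Num.Def.archi_bound `|Y w|) => //=.
  by apply: le_trans (ler_norm _) (ltW (archi_boundP _)).
have := measure_sigma_subadditive P (fun n => measurable_sublevel n%:R mY) measurableT cover.
rewrite eseries0; last by move=> n _ _; exact: PK.
rewrite [X in X <= _ -> _](_ : _ = 1) ?lee_fin ?ler10//; exact: probability_setT.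
Qed.

Lemma Lnorm_scale_indic {p c : R} {B : set T} : measurable B -> (0 < p)%R -> (0 <= c)%R ->
  Lnorm P p%:E (fun w => (- (c * \1_B w))%:E) = (c * fine (P B) `^ p^-1)%:E.
Proof.
move=> mB p0 c0; rewrite unlock /=.
rewrite (eq_integral (fun x => (c `^ p * \1_B x)%:E)); last first.
  move=> x _; congr EFin; rewrite normrN normrM (ger0_norm c0) indicE.
  by case: (x \in B); rewrite ?normr1 ?normr0 ?mulr1 ?mulr0 ?powR0 ?gt_eqF.
rewrite (@integralZl_indic _ _ _ _ _ measurableT (fun _ => B)) //; last first.
  by move=> cp0; move: (powR_ge0 c p); rewrite leNgt cp0.
rewrite integral_indic // setIT.
rewrite [X in _ * X](_ : _ = (fine (P B))%:E); last exact/esym/fineK/fin_num_measure.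
rewrite -EFinM poweR_EFin.
rewrite powRM ?powR_ge0 ?fine_ge0 ?measure_ge0//.
by rewrite -powRrM mulfV ?gt_eqF// powRr1.
Qed.

Lemma Lnorm_lt_measureC_norm_le1 {p eta : R} {f : T -> R} :
  measurable_fun setT f -> (0 < p)%R -> (0 < eta)%R ->
  Lnorm P p%:E (EFin \o f) < (eta `^ p^-1)%:E ->
  P (~` [set w | (`|f w| <= 1)%R]) < eta%:E.
Proof.
move=> mf p0 eta0 fp; rewrite ltNge; apply/negP => etaG.
set G := ~` _ in etaG.
have mG : measurable G by exact/measurableC/measurable_sublevel/measurableT_comp.
have Gint : P G <= \int[P]_w (`|(f w)%:E| `^ p).
  rewrite [leLHS](_ : _ = \int[P]_w (\1_G w)%:E); last by rewrite integral_indic// setIT.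
  apply: ge0_le_integral => //.
  - exact/measurable_EFinP/measurable_indic.
  - apply/(measurableT_comp (measurable_poweR _))/measurableT_comp => //.
    exact/measurable_EFinP.
  - move=> x _; rewrite indicE abse_EFin poweR_EFin lee_fin.
    case: (boolP (x \in G)) => [|_]; last exact: powR_ge0.
    rewrite inE /= => /negP; rewrite -ltNge => /ltW f1.
    by rewrite mulr1n -(powRr0 `|f x|) ler_powR// ltW.
have : (eta%:E) `^ p^-1 <= (\int[P]_w (`|(f w)%:E| `^ p)) `^ p^-1.
  apply: gt0_ler_poweR.
  - by rewrite invr_ge0 ltW.
  - by rewrite in_itv /= leey lee_fin ltW.
  - by rewrite in_itv /= leey andbT integral_ge0// => x _; exact: poweR_ge0.
  - exact: le_trans etaG Gint.
by move: fp; rewrite unlock /= => /lt_le_trans/[apply]; rewrite ltxx.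
Qed.

Lemma integral_le_1_sub {g : T -> R} {F : set T} {L : R} :
  measurable_fun setT g -> measurable F -> (0 <= L)%R ->
  (forall w, (g w <= 1)%R) -> (forall w, F w -> (g w <= 1 - L)%R) ->
  \int[P]_w (g w)%:E <= (1 - L * fine (P F))%:E.
Proof.
move=> mg mF L0 g1 gF.
have i1 := finite_measure_integrable_cst P 1 measurableT.
have iL := integrableZl measurableT L (integrable_indic P mF).
have i1L : P.-integrable setT (fun w => (1 - L * \1_F w)%:E).
  apply: (eq_integrable measurableT _ _ _ (integrableB measurableT i1 iL)) => x _ /=.
  by rewrite EFinB EFinM.
have g1L : forall w, ((g w)%:E <= (1 - L * \1_F w)%:E).
  move=> w; rewrite lee_fin indicE; case: (boolP (w \in F)) => [|_].
    by rewrite inE mulr1 => /gF.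
  by rewrite mulr0 subr0.
have mEg : measurable_fun setT (fun w => (g w)%:E) by exact/measurable_EFinP.
apply: le_trans (le_integral_integrable mEg i1L g1L) _.
rewrite (eq_integral (fun w => (cst 1 w)%:E - (L * \1_F w)%:E)); last first.
  by move=> x _; rewrite EFinB.
rewrite integralB_EFin // (integral_cst P measurableT 1) mul1e.
rewrite [X in X - _](_ : _ = 1); last exact: probability_setT.
rewrite (@integralZl_indic _ _ _ _ _ measurableT (fun _ => F)) //; last first.
  by move=> L0'; move: L0; rewrite leNgt L0'.
rewrite integral_indic // setIT.
rewrite [X in _ * X](_ : _ = (fine (P F))%:E); last exact/esym/fineK/fin_num_measure.
by rewrite -EFinM -EFinB.
Qed.

Lemma Lp_sub_scale_indic {p c : R} {Y : T -> R} {B : set T} :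
  (1 <= p)%R -> measurable B -> (0 <= c)%R -> Lp P p Y ->
  Lp P p (fun w => Y w - c * \1_B w)%R /\
  Lp_dist P p (fun w => Y w - c * \1_B w)%R Y = (c * fine (P B) `^ p^-1)%:E.
Proof.
move=> p1 mB c0 LY; have p0 : (0 < p)%R by lra.
have NcB := Lnorm_scale_indic mB p0 c0.
have LcB : (fun w => - (c * \1_B w))%R \in Lfun P p%:E.
  rewrite inE; apply/andP; split.
    by rewrite inE; apply/measurableT_comp/measurable_funM/measurable_indic.
  by rewrite inE /= /finite_norm NcB ltry.
split; first exact: (Lfun_addr_closed P (p := p%:E) _).2 _ _ LY LcB.
by rewrite /Lp_dist -NcB; apply: eq_Lnorm => w /=; rewrite addrAC subrr add0r.
Qed.

Lemma measure_setI_norm_le1_gt_half {p : R} {f : T -> R} {B : set T} :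
  (0 < p)%R -> measurable B -> 0 < P B -> measurable_fun setT f ->
  Lnorm P p%:E (EFin \o f) < ((fine (P B) / 2) `^ p^-1)%:E ->
  (fine (P B) / 2 < fine (P (B `&` [set w | `|f w| <= 1])))%R.
Proof.
move=> p0 mB PB0 mf fp.
set S := [set w | (`|f w| <= 1)%R].
have mS : measurable S by exact/measurable_sublevel/measurableT_comp.
have fin A : measurable A -> P A \is a fin_num by exact: fin_num_measure.
have PB0' : (0 < fine (P B))%R by rewrite -lte_fin fineK ?fin.
have PS := Lnorm_lt_measureC_norm_le1 mf p0 (divr_gt0 PB0' (@ltr0Sn R 1)) fp.
have {PS} : (fine (P (~` S)) < fine (P B) / 2)%R.
  by apply: (fine_lt (fin _ (measurableC mS)) _ PS).
have BSS : P (B `\` S) <= P (~` S).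
  by apply: le_measure; rewrite ?inE; [exact: measurableD|exact: measurableC|move=> w []].
have BSB : P (B `\` S) = P B - P (B `&` S).
  by rewrite measureD// (le_lt_trans (probability_le1 P mB) (ltry _)).
have := fine_le (fin _ (measurableD mB mS)) (fin _ (measurableC mS)) BSS.
rewrite BSB fineB ?fin //; [lra | exact: measurableI].
Qed.

Lemma A_u_approx_measure_lt {gamma alpha p m : R} {X Z : T -> R} {B : set T} :
  (0 <= gamma)%R -> (0 < p)%R -> A_u P gamma alpha X ->
  measurable B -> 0 < P B -> measurable_fun setT Z -> (forall w, B w -> (Z w <= m)%R) ->
  Lp_dist P p X Z < ((fine (P B) / 2) `^ p^-1)%:E ->
  (expR (- (gamma * (m + 1))) * fine (P B) < 2 * (1 - alpha))%R.
Proof.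
move=> g0 p0 [LX aX] mB PB0 mZ Zm XZ.
have mX : measurable_fun setT X by move/sub_Lfun_mfun: LX; rewrite inE.
have mXZ : measurable_fun setT (fun w => X w - Z w)%R by exact: measurable_funB.
have PF := measure_setI_norm_le1_gt_half p0 mB PB0 mXZ XZ.
set F := B `&` _ in PF.
have mF : measurable F by exact/measurableI/measurable_sublevel/measurableT_comp.
set L := expR (- (gamma * (m + 1))).
have uF w : F w -> (u_exp gamma (X w) <= 1 - L)%R.
  move=> [/Zm Zw /= /ler_normlP[_ XZ1]].
  by rewrite /u_exp lerB// ler_expR lerN2 ler_wpM2l//; lra.
have u1 w : (u_exp gamma (X w) <= 1)%R by rewrite /u_exp gerBl expR_ge0.
have mu : measurable_fun setT (fun w => u_exp gamma (X w)).
  by apply/measurable_funB/measurableT_comp/measurableT_comp/measurable_funM.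
have := le_trans aX (integral_le_1_sub mu mF (ltW (expR_gt0 _)) u1 uF).
by rewrite lee_fin; have := expR_gt0 (- (gamma * (m + 1))); rewrite -/L; nra.
Qed.

Lemma Lp_closure_A_u_interior_empty (gamma alpha p : R) :
  nonatomic P -> (0 < gamma)%R -> (1 <= p)%R ->
  ~ Lp_interior_nonempty P p (Lp_closure P p (A_u P gamma alpha)).
Proof.
move=> nP g0 p1 [Y [LY [_ [e [e0 ballY]]]]].
have p0 : (0 < p)%R by lra.
have mY : measurable_fun setT Y by move/sub_Lfun_mfun: LY; rewrite inE.
have [K PK] := exists_sublevel_gt0 mY.
have [q0 q00 expq] := expR_div_mul_powR_ge_near0 _ (gamma * (K + 1))%R (2 * (1 - alpha))%R _
  (divr_gt0 (mulr_gt0 g0 e0) (@ltr0Sn R 1)) p1.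
have [B [mB BK PB0 PBq]] :=
  nonatomic_subset_small nP (measurable_sublevel K mY) PK (powR_gt0 p q00).
set δ := fine (P B).
have δ0 : (0 < δ)%R by rewrite -lte_fin fineK ?fin_num_measure.
have δq : (δ <= q0 `^ p)%R by rewrite -lee_fin fineK ?fin_num_measure.
set q := (δ `^ p^-1)%R.
have q0' : (0 < q)%R by rewrite powR_gt0.
have qp : (q `^ p = δ)%R by rewrite -powRrM mulVf ?gt_eqF// powRr1// ltW.
have qq0 : (q <= q0)%R.
  rewrite -[leRHS](powRr1 (ltW q00)) -(mulfV (lt0r_neq0 p0)) powRrM.
  by apply: (ge0_ler_powR _ _ _ δq); rewrite ?invr_ge0 ?nnegrE ?powR_ge0 ?ltW.
set c := (e / (2 * q))%R.
have c0 : (0 <= c)%R by rewrite divr_ge0 ?ltW // mulr_gt0.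
have [LZ dZY] := Lp_sub_scale_indic p1 mB c0 LY.
have [_ closeZ] : Lp_closure P p (A_u P gamma alpha) (fun w => Y w - c * \1_B w)%R.
  apply: ballY => //; rewrite dZY -/δ -/q lte_fin.
  have -> : (c * q = e / 2)%R by rewrite /c; field; rewrite gt_eqF.
  lra.
have [X [AX _ dXZ]] := closeZ _ (powR_gt0 p^-1 (divr_gt0 δ0 (@ltr0Sn R 1))).
have mZ : measurable_fun setT (fun w => Y w - c * \1_B w)%R.
  exact/measurable_funB/measurable_funM/measurable_indic.
have ZKc w : B w -> (Y w - c * \1_B w <= K - c)%R.
  by move=> Bw; rewrite indicE mem_set// mulr1 lerB//; exact: BK.
have := A_u_approx_measure_lt (ltW g0) p0 AX mB PB0 mZ ZKc dXZ.
have := expq q q0' qq0; rewrite qp.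
suff -> : (gamma * e / 2 / q - gamma * (K + 1) = - (gamma * (K - c + 1)))%R.
  by rewrite -/δ; lra.
by rewrite /c; field; rewrite gt_eqF.
Qed.

End probability.

Theorem corollary6p7 (d : measure_display) (T : measurableType d) (R : realType)
    (P : probability T R) (gamma alpha S0 : R) (ST : T -> R) :
  nonatomic P ->
  0 < gamma -> alpha < 1 ->
  0 < S0 ->
  Linf P ST ->
  {ae P, forall w, 0 <= ST w} ->
  ~ {ae P, forall w, ST w = 0} ->
  finite_valued_on_Linf P (A_u P gamma alpha) S0 ST ->
  IndexFin P (A_u P gamma alpha) = +oo%E.
Proof.
move=> nP g0 _ _ _ _ _ _; rewrite /IndexFin.
suff -> : [set p : R | 1 <= p /\
    Lp_interior_nonempty P p (Lp_closure P p (A_u P gamma alpha))] = set0.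
  by rewrite image_set0 ereal_inf0.
by apply/seteqP; split => // p [p1]; exact: Lp_closure_A_u_interior_empty.
Qed.
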